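(* Let $G$ be a compact graph in $\mathbb{R}^d$ and $C$ a finite $\epsilon$-sample of $G$, and fix $k\ge1$. If $|\mathrm{dgap}_k(G)|-|\mathrm{dgap}_{k+1}(G)|>8\epsilon$, then there is a bijection $\psi:\mathrm{DS}_k(G)\to\mathrm{DS}_k(C)$ of multisets with $\|q-\psi(q)\|_\infty\le\epsilon$ for all $q\in\mathrm{DS}_k(G)$.
   Context: Offsets $X^\alpha$: union of closed radius-$\alpha$ balls centred at points of $X$. $C$ is an $\epsilon$-sample of $G$ if $C\subseteq G^\epsilon$ and $G\subseteq C^\epsilon$. $\mathrm{PD}\{X^\alpha\}$: 1-dimensional $\mathbb{Z}_2$ persistence diagram of $\{X^\alpha\}$, dots $(x,y)=$(birth, death) with multiplicity plus the diagonal with infinite multiplicity; off-diagonal parts assumed finite. Known stability fact: there is a bijection $\psi:\mathrm{PD}\{G^\alpha\}\to\mathrm{PD}\{C^\alpha\}$ with $\|q-\psi(q)\|_\infty\le\epsilon$ for all $q$ ($L_\infty$ distance $\max\{|x_1-x_2|,|y_1-y_2|\}$). Diagonal gaps of a diagram: let $0<a_1<\dots<a_n$ be the distinct values of $y-x$ over off-diagonal dots and $a_0=0$; diagonal gaps are $\{a_{j-1}<y-x<a_j\}$, width $a_j-a_{j-1}$; ranked by width with ties broken so the lower gap counts as wider; $\mathrm{dgap}_k$ is the $k$-th widest, $|\mathrm{dgap}_k|$ its width ($0$ if $k>n$). $\mathrm{DS}_k$ is the multiset of dots above the lowest of $\mathrm{dgap}_1,\dots,\mathrm{dgap}_k$.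 Notation $\mathrm{dgap}_k(X),\mathrm{DS}_k(X)$ refers to $\mathrm{PD}\{X^\alpha\}$. *)

From Stdlib Require Import Reals Lra Lia List Permutation.
Import ListNotations.
Open Scope R_scope.

(* A persistence diagram is represented by the finite multiset (list) of its
   off-diagonal dots (birth, death); the diagonal (infinite multiplicity) is
   implicit. *)
Definition dot := (R * R)%type.
Definition diagram := list dot.

Definition pers (p : dot) : R := snd p - fst p.

Definition linf (p q : dot) : R :=
  Rmax (Rabs (fst p - fst q)) (Rabs (snd p - snd q)).

Definition off_diagonal (D : diagram) : Prop := Forall (fun p => fst p < snd p) D.

(* Bijection between full diagrams (dots + diagonal with infinite multiplicity)
   moving every point by at most eps in L_infinity: matched dot pairs M, and
   dots U1 / U2 matched to diagonal points.  The L_inf distance of (x,y) to the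
   diagonal is (y-x)/2. Diagonal-to-diagonal pairs are irrelevant. *)
Definition eps_matching (eps : R) (D1 D2 : diagram) : Prop :=
  exists (M : list (dot * dot)) (U1 U2 : diagram),
    Permutation D1 (map fst M ++ U1) /\
    Permutation D2 (map snd M ++ U2) /\
    Forall (fun pq => linf (fst pq) (snd pq) <= eps) M /\
    Forall (fun p => pers p / 2 <= eps) U1 /\
    Forall (fun p => pers p / 2 <= eps) U2.

Definition eps_bijection (eps : R) (D1 D2 : diagram) : Prop :=
  exists M : list (dot * dot),
    Permutation D1 (map fst M) /\
    Permutation D2 (map snd M) /\
    Forall (fun pq => linf (fst pq) (snd pq) <= eps) M.

Definition vals (D : diagram) : list R := nodup Req_EM_T (map pers D).

(* A gap {a_{j-1} < y-x < a_j} is identified by its upper end a = a_j.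
   lower end a_{j-1}: largest value below a, or a_0 = 0. *)
Definition gap_lo (D : diagram) (a : R) : R :=
  fold_right (fun v acc => if Rlt_dec v a then Rmax v acc else acc) 0 (vals D).

Definition gap_width (D : diagram) (a : R) : R := a - gap_lo D a.

Definition widerb (D : diagram) (a b : R) : bool :=
  if Rlt_dec (gap_width D b) (gap_width D a) then true
  else if Req_EM_T (gap_width D a) (gap_width D b) then
         (if Rlt_dec a b then true else false)
       else false.

Definition gap_rank (D : diagram) (a : R) : nat :=
  S (length (filter (fun b => widerb D b a) (vals D))).

(* |dgap_k| : width of the k-th widest gap, 0 if k > n *)
Definition dgap_width (D : diagram) (k : nat) : R :=
  fold_right (fun a acc => if Nat.eqb (gap_rank D a) k then gap_width D a else acc)
             0 (vals D).

Definition top_gaps (D : diagram) (k : nat) : list R :=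
  filter (fun a => Nat.leb (gap_rank D a) k) (vals D).

(* DS_k : multiset of dots above the lowest of dgap_1..dgap_k, i.e. dots with
   y - x >= upper end of that lowest gap. *)
Definition DS (D : diagram) (k : nat) : diagram :=
  match top_gaps D k with
  | [] => []
  | a :: l =>
      let amin := fold_right Rmin a l in
      filter (fun p => if Rle_dec amin (pers p) then true else false) D
  end.

From Stdlib Require Import Reals Lra Lia List Permutation Classical Bool.
Import ListNotations.
Open Scope R_scope.

(* A diagonal gap of a diagram D is named by its upper end a (a persistence
   value of D); its lower end is the largest persistence value below a (or 0).
   The proof has three layers.
   1. Ranking: the "wider" relation is a strict total order on gaps, the k
      top-ranked gaps all have width >= |dgap_k|, all others have width
      <= |dgap_(k+1)|, and any k gaps that are strictly wider than all the
      remaining ones are exactly the top k gaps.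
   2. Transfer: an eps-matching moves persistence values by at most 2 eps.
      Sending a gap a of G to the least value of C that is >= a - 2 eps
      changes widths by at most 4 eps, so under the gap hypothesis
      |dgap_k(G)| - |dgap_(k+1)(G)| > 8 eps the transfer maps the top k gaps
      of G onto the top k gaps of C, preserving their order.
   3. Matching: DS_k keeps the dots above the lowest top gap; since the
      thresholds of G and C correspond under the transfer and the gap below
      them has width > 4 eps, a matched pair lies above both thresholds or
      below both, so restricting the matching gives the bijection.
   A negative eps only matches empty diagrams, where the claim is trivial. *)

Lemma Permutation_filter_compat {A} (f : A -> bool) (l l' : list A) :
  Permutation l l' -> Permutation (filter f l) (filter f l').
Proof.
  induction 1 as [|x l l' _ IH|x y l|l l' l'' _ IH1 _ IH2]; simpl.
  - constructor.
  - destruct (f x); [apply perm_skip|]; exact IH.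
  - destruct (f x), (f y); try apply perm_swap; apply Permutation_refl.
  - eapply Permutation_trans; eassumption.
Qed.

Lemma exists_argmin {A} (l : list A) (P : A -> Prop) (mu : A -> R) :
  (exists x, In x l /\ P x) ->
  exists m, In m l /\ P m /\ forall x, In x l -> P x -> mu m <= mu x.
Proof.
  induction l as [|a l IH]; intros [x [Hx HPx]]; [destruct Hx|].
  destruct (classic (exists y, In y l /\ P y)) as [Hex|Hnone].
  - destruct (IH Hex) as [m [Hm [HPm Hmin]]].
    destruct (classic (P a /\ mu a <= mu m)) as [[HPa Ham]|Hnot].
    + exists a. split; [left; reflexivity|]. split; [exact HPa|].
      intros y [<-|Hy] HPy; [lra|]. specialize (Hmin y Hy HPy). lra.
    + exists m. split; [right; exact Hm|]. split; [exact HPm|].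
      intros y [<-|Hy] HPy; [|exact (Hmin y Hy HPy)].
      destruct (Rle_dec (mu a) (mu m)); [exfalso; tauto|lra].
  - destruct Hx as [<-|Hx]; [|exfalso; apply Hnone; eauto].
    exists a. split; [left; reflexivity|]. split; [exact HPx|].
    intros y [<-|Hy] HPy; [lra|exfalso; apply Hnone; eauto].
Qed.

Lemma fold_Rmin_spec (x : R) (l : list R) :
  In (fold_right Rmin x l) (x :: l) /\
  forall y, In y (x :: l) -> fold_right Rmin x l <= y.
Proof.
  induction l as [|a l [IHin IHle]]; simpl.
  - split; [left; reflexivity|]. intros y [<-|[]]; lra.
  - pose proof (Rmin_l a (fold_right Rmin x l)).
    pose proof (Rmin_r a (fold_right Rmin x l)).
    split.
    + destruct (Rle_dec a (fold_right Rmin x l)).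
      * rewrite Rmin_left by lra. right; left; reflexivity.
      * rewrite Rmin_right by lra. simpl in IHin. tauto.
    + intros y [<-|[<-|Hy]]; [specialize (IHle x (or_introl eq_refl)); lra|lra|].
      specialize (IHle y (or_intror Hy)). lra.
Qed.

Definition least_from (l : list R) (t : R) : R :=
  match filter (fun v => if Rle_dec t v then true else false) l with
  | [] => t
  | x :: l' => fold_right Rmin x l'
  end.

Lemma least_from_spec (l : list R) (t : R) :
  (exists v, In v l /\ t <= v) ->
  In (least_from l t) l /\ t <= least_from l t /\
  forall v, In v l -> t <= v -> least_from l t <= v.
Proof.
  intros [w [Hw Htw]]. unfold least_from.
  assert (Hsel : forall v, In v (filter (fun v => if Rle_dec t v then true else false) l)
                           <-> In v l /\ t <= v).
  { intros v. rewrite filter_In. destruct (Rle_dec t v); intuition discriminate. }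
  destruct (filter _ l) as [|x l'] eqn:Ef.
  - exfalso. apply (proj2 (Hsel w)). split; assumption.
  - destruct (fold_Rmin_spec x l') as [Hin Hle].
    apply Hsel in Hin as [Hin Ht].
    split; [exact Hin|]. split; [exact Ht|].
    intros v Hv Htv. apply Hle, Hsel. split; assumption.
Qed.

Lemma vals_NoDup (D : diagram) : NoDup (vals D).
Proof. apply NoDup_nodup. Qed.

Lemma vals_in (D : diagram) (v : R) : In v (vals D) <-> exists p, In p D /\ pers p = v.
Proof.
  unfold vals. rewrite nodup_In, in_map_iff. split; intros [p [H1 H2]]; eauto.
Qed.

Lemma vals_pos (D : diagram) (v : R) : off_diagonal D -> In v (vals D) -> 0 < v.
Proof.
  intros HD Hv. apply vals_in in Hv as [p [Hp <-]].
  unfold off_diagonal in HD. rewrite Forall_forall in HD. specialize (HD p Hp).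
  unfold pers. lra.
Qed.

Lemma gap_lo_nonneg (D : diagram) (a : R) : 0 <= gap_lo D a.
Proof.
  unfold gap_lo. induction (vals D) as [|v l IH]; simpl; [lra|].
  destruct (Rlt_dec v a); [|exact IH].
  eapply Rle_trans; [exact IH|apply Rmax_r].
Qed.

Lemma gap_lo_ge (D : diagram) (a v : R) : In v (vals D) -> v < a -> v <= gap_lo D a.
Proof.
  unfold gap_lo. generalize (vals D) as l.
  induction l as [|b l IH]; simpl; intros Hv Hlt; [destruct Hv|].
  destruct Hv as [<-|Hv].
  - destruct (Rlt_dec b a); [apply Rmax_l|contradiction].
  - destruct (Rlt_dec b a); [|exact (IH Hv Hlt)].
    eapply Rle_trans; [exact (IH Hv Hlt)|apply Rmax_r].
Qed.

Lemma gap_lo_le (D : diagram) (a U : R) :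
  0 <= U -> (forall v, In v (vals D) -> v < a -> v <= U) -> gap_lo D a <= U.
Proof.
  unfold gap_lo. generalize (vals D) as l.
  induction l as [|b l IH]; simpl; intros HU Hall; [exact HU|].
  destruct (Rlt_dec b a); [apply Rmax_lub|]; auto.
Qed.

Lemma gap_lo_cases (D : diagram) (a : R) :
  gap_lo D a = 0 \/ (In (gap_lo D a) (vals D) /\ gap_lo D a < a).
Proof.
  unfold gap_lo. generalize (vals D) as l.
  induction l as [|b l IH]; simpl; [left; reflexivity|].
  destruct (Rlt_dec b a) as [Hba|]; [|destruct IH as [H|[H1 H2]]; auto].
  destruct (Rle_dec b (fold_right (fun v acc => if Rlt_dec v a then Rmax v acc else acc) 0 l)).
  - rewrite Rmax_right by assumption. destruct IH as [H|[H1 H2]]; auto.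
  - rewrite Rmax_left by lra. right; split; [left; reflexivity|exact Hba].
Qed.

Lemma gap_width_pos (D : diagram) (a : R) :
  off_diagonal D -> In a (vals D) -> 0 < gap_width D a.
Proof.
  intros HD Ha. unfold gap_width.
  destruct (gap_lo_cases D a) as [->|[_ Hlt]]; [|lra].
  pose proof (vals_pos D a HD Ha). lra.
Qed.

Lemma gap_width_le (D : diagram) (a : R) : gap_width D a <= a.
Proof. unfold gap_width. pose proof (gap_lo_nonneg D a). lra. Qed.

Lemma gap_width_le_diff (D : diagram) (b a : R) :
  In b (vals D) -> b < a -> gap_width D a <= a - b.
Proof. intros Hb Hlt. unfold gap_width. pose proof (gap_lo_ge D a b Hb Hlt). lra. Qed.

Section GapRanking.
Variable D : diagram.

Lemma widerb_spec (a b : R) : widerb D a b = true <->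
  gap_width D b < gap_width D a \/ (gap_width D a = gap_width D b /\ a < b).
Proof.
  unfold widerb. destruct (Rlt_dec _ _); [split; auto|].
  destruct (Req_EM_T _ _), (Rlt_dec a b); split; intros H; auto; try discriminate;
    destruct H as [H|[H1 H2]]; lra.
Qed.

Lemma widerb_irrefl (a : R) : widerb D a a = false.
Proof. destruct (widerb D a a) eqn:E; [apply widerb_spec in E; lra|reflexivity]. Qed.

Lemma widerb_trans (a b c : R) :
  widerb D a b = true -> widerb D b c = true -> widerb D a c = true.
Proof. rewrite !widerb_spec. lra. Qed.

Lemma widerb_total (a b : R) : a <> b -> widerb D a b = true \/ widerb D b a = true.
Proof.
  intros Hne. rewrite !widerb_spec.
  destruct (Rtotal_order (gap_width D a) (gap_width D b)) as [H|[H|H]]; [lra| |lra].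
  destruct (Rtotal_order a b) as [H'|[H'|H']]; [lra|contradiction|lra].
Qed.

Lemma widerb_width (a b : R) : widerb D a b = true -> gap_width D b <= gap_width D a.
Proof. rewrite widerb_spec. lra. Qed.

Lemma wider_cons_NoDup (b : R) : NoDup (b :: filter (fun x => widerb D x b) (vals D)).
Proof.
  constructor; [|apply NoDup_filter, vals_NoDup].
  intros Hin. apply filter_In in Hin as [_ Hbb]. rewrite widerb_irrefl in Hbb. discriminate.
Qed.

Lemma gap_rank_lt (a b : R) :
  In a (vals D) -> widerb D a b = true -> (gap_rank D a < gap_rank D b)%nat.
Proof.
  intros Ha Hab. unfold gap_rank. apply -> Nat.succ_lt_mono.
  assert (Hincl : incl (a :: filter (fun x => widerb D x a) (vals D))
                       (filter (fun x => widerb D x b) (vals D))).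
  { intros x [<-|Hx]; apply filter_In; [split; assumption|].
    apply filter_In in Hx as [Hx Hxa]. split; [exact Hx|eapply widerb_trans; eassumption]. }
  apply (NoDup_incl_length (wider_cons_NoDup a)) in Hincl. simpl in Hincl. lia.
Qed.

Lemma gap_rank_le_wider (a b : R) : In a (vals D) -> In b (vals D) -> a <> b ->
  (gap_rank D a <= gap_rank D b)%nat -> widerb D a b = true.
Proof.
  intros Ha Hb Hne Hle. destruct (widerb_total a b Hne) as [H|H]; [exact H|].
  apply gap_rank_lt in H; [lia|exact Hb].
Qed.

Lemma dgap_width_spec (k : nat) (b : R) :
  In b (vals D) -> gap_rank D b = k -> dgap_width D k = gap_width D b.
Proof.
  intros Hb Hr. unfold dgap_width.
  assert (Huniq : forall x, In x (vals D) -> gap_rank D x = k -> x = b).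
  { intros x Hx Hxr. destruct (Req_EM_T x b) as [|Hne]; [assumption|].
    destruct (widerb_total x b Hne) as [H|H]; apply gap_rank_lt in H; auto; lia. }
  revert Hb Huniq. generalize (vals D) as l.
  induction l as [|x l IH]; cbn [fold_right In]; intros Hb Huniq; [destruct Hb|].
  destruct (Nat.eqb (gap_rank D x) k) eqn:E.
  - apply Nat.eqb_eq in E. f_equal. apply Huniq; [left; reflexivity|exact E].
  - destruct Hb as [<-|Hb]; [apply Nat.eqb_neq in E; contradiction|auto].
Qed.

Lemma dgap_width_cases (k : nat) : dgap_width D k = 0 \/
  exists b, In b (vals D) /\ gap_rank D b = k /\ dgap_width D k = gap_width D b.
Proof.
  destruct (classic (exists b, In b (vals D) /\ gap_rank D b = k)) as [[b [Hb Hr]]|Hnone].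
  - right. exists b. repeat split; auto using dgap_width_spec.
  - left. unfold dgap_width.
    assert (Hno : forall x, In x (vals D) -> gap_rank D x <> k)
      by (intros x Hx Hr; apply Hnone; eauto).
    revert Hno. generalize (vals D) as l.
    induction l as [|x l IH]; cbn [fold_right In]; intros Hno; [reflexivity|].
    destruct (Nat.eqb (gap_rank D x) k) eqn:E; [|auto].
    apply Nat.eqb_eq in E. exfalso; eapply Hno; eauto.
Qed.

Lemma dgap_width_nonneg (k : nat) : off_diagonal D -> 0 <= dgap_width D k.
Proof.
  intros HD. destruct (dgap_width_cases k) as [->|[b [Hb [_ ->]]]]; [lra|].
  left. apply gap_width_pos; assumption.
Qed.

Lemma top_gaps_spec (k : nat) (a : R) :
  In a (top_gaps D k) <-> In a (vals D) /\ (gap_rank D a <= k)%nat.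
Proof. unfold top_gaps. rewrite filter_In, Nat.leb_le. tauto. Qed.

Lemma top_gaps_length (k : nat) : dgap_width D k <> 0 -> length (top_gaps D k) = k.
Proof.
  intros Hw. destruct (dgap_width_cases k) as [|[b [Hb [Hr _]]]]; [contradiction|].
  set (W := b :: filter (fun x => widerb D x b) (vals D)).
  assert (HtopW : incl (top_gaps D k) W).
  { intros x Hx. apply top_gaps_spec in Hx as [Hx Hxr].
    destruct (Req_EM_T x b) as [->|Hne]; [left; reflexivity|].
    right. apply filter_In. split; [exact Hx|]. apply gap_rank_le_wider; auto; lia. }
  assert (HWtop : incl W (top_gaps D k)).
  { intros x [<-|Hx]; apply top_gaps_spec; [split; [exact Hb|lia]|].
    apply filter_In in Hx as [Hx Hxb]. apply gap_rank_lt in Hxb; [split; [exact Hx|lia]|exact Hx]. }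
  apply NoDup_incl_length in HtopW; [|apply NoDup_filter, vals_NoDup].
  apply (NoDup_incl_length (wider_cons_NoDup b)) in HWtop.
  unfold gap_rank in Hr. subst W. simpl in *. lia.
Qed.

Lemma top_gap_width_ge (k : nat) (a : R) : off_diagonal D ->
  In a (top_gaps D k) -> dgap_width D k <= gap_width D a.
Proof.
  intros HD Ha. apply top_gaps_spec in Ha as [Ha Hr].
  destruct (dgap_width_cases k) as [->|[b [Hb [Hbr ->]]]]; [left; apply gap_width_pos; assumption|].
  destruct (Req_EM_T a b) as [->|Hne]; [lra|].
  apply widerb_width, gap_rank_le_wider; auto; lia.
Qed.

Lemma nontop_gap_width_le (k : nat) (a : R) : dgap_width D k <> 0 ->
  In a (vals D) -> ~ In a (top_gaps D k) -> gap_width D a <= dgap_width D (S k).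
Proof.
  intros Hw Ha Hna.
  assert (Hra : (k < gap_rank D a)%nat).
  { destruct (Nat.le_gt_cases (gap_rank D a) k); [|assumption].
    exfalso; apply Hna, top_gaps_spec; auto. }
  destruct (exists_argmin (vals D) (fun x => (k < gap_rank D x)%nat) (fun x => INR (gap_rank D x)))
    as [m [Hm [Hkm Hmin]]]; [eauto|].
  assert (Hrm : gap_rank D m = S k).
  { unfold gap_rank at 1. f_equal. rewrite <- (top_gaps_length k Hw). unfold top_gaps.
    f_equal. apply filter_ext_in. intros x Hx. apply eq_true_iff_eq. rewrite Nat.leb_le. split.
    - intros Hxm. apply gap_rank_lt in Hxm; [|exact Hx].
      destruct (Nat.le_gt_cases (gap_rank D x) k) as [|Hkx]; [assumption|].
      specialize (Hmin x Hx Hkx). apply INR_le in Hmin. lia.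
    - intros Hxk. apply gap_rank_le_wider; auto; [intros ->; lia|lia]. }
  rewrite (dgap_width_spec (S k) m Hm Hrm).
  destruct (Req_EM_T a m) as [->|Hne]; [lra|].
  apply widerb_width, gap_rank_le_wider; auto; lia.
Qed.

Lemma top_gaps_char (k : nat) (B : list R) :
  NoDup B -> length B = k -> incl B (vals D) ->
  (forall b c, In b B -> In c (vals D) -> ~ In c B -> gap_width D c < gap_width D b) ->
  forall c, In c (vals D) -> (In c (top_gaps D k) <-> In c B).
Proof.
  intros HB Hlen Hincl Hsep c Hc. rewrite top_gaps_spec. split.
  - intros [_ Hr]. apply NNPP. intros HcB.
    assert (Hwider : incl B (filter (fun x => widerb D x c) (vals D))).
    { intros b Hb. apply filter_In. split; [auto|].
      apply widerb_spec. left. apply Hsep; assumption. }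
    apply (NoDup_incl_length HB) in Hwider. unfold gap_rank in Hr. lia.
  - intros HcB. split; [exact Hc|].
    assert (Hsub : incl (c :: filter (fun x => widerb D x c) (vals D)) B).
    { intros x [<-|Hx]; [exact HcB|]. apply filter_In in Hx as [Hx Hxc].
      apply NNPP. intros HxB. specialize (Hsep c x HcB Hx HxB).
      apply widerb_width in Hxc. lra. }
    apply (NoDup_incl_length (wider_cons_NoDup c)) in Hsub.
    unfold gap_rank. simpl in Hsub. lia.
Qed.

End GapRanking.

Lemma Rabs_le_inv (x e : R) : Rabs x <= e -> - e <= x <= e.
Proof. unfold Rabs; destruct (Rcase_abs x); lra. Qed.

Lemma linf_nonneg (p q : dot) : 0 <= linf p q.
Proof. unfold linf. eapply Rle_trans; [apply Rabs_pos|apply Rmax_l]. Qed.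

Lemma linf_sym (p q : dot) : linf p q = linf q p.
Proof. unfold linf. rewrite (Rabs_minus_sym (fst p)), (Rabs_minus_sym (snd p)). reflexivity. Qed.

Lemma linf_pers (p q : dot) (e : R) : linf p q <= e -> Rabs (pers p - pers q) <= 2 * e.
Proof.
  unfold linf, pers. intros H.
  pose proof (Rmax_l (Rabs (fst p - fst q)) (Rabs (snd p - snd q))) as H1.
  pose proof (Rmax_r (Rabs (fst p - fst q)) (Rabs (snd p - snd q))) as H2.
  assert (Hb : Rabs (fst p - fst q) <= e) by lra.
  assert (Hd : Rabs (snd p - snd q) <= e) by lra.
  apply Rabs_le_inv in Hb, Hd. apply Rabs_le. lra.
Qed.

Lemma eps_matching_sym (eps : R) (D1 D2 : diagram) :
  eps_matching eps D1 D2 -> eps_matching eps D2 D1.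
Proof.
  intros [M [U1 [U2 [P1 [P2 [FM [FU1 FU2]]]]]]].
  exists (map (fun pq => (snd pq, fst pq)) M), U2, U1.
  rewrite !map_map. repeat split; try assumption.
  rewrite Forall_map. eapply Forall_impl; [|exact FM].
  intros pq. simpl. rewrite linf_sym. tauto.
Qed.

Definition pers_values_close (eps : R) (D1 D2 : diagram) : Prop :=
  forall v, In v (vals D1) -> v <= 2 * eps \/ exists w, In w (vals D2) /\ Rabs (v - w) <= 2 * eps.

Lemma matching_values_close (eps : R) (D1 D2 : diagram) :
  eps_matching eps D1 D2 -> pers_values_close eps D1 D2.
Proof.
  intros [M [U1 [U2 [P1 [P2 [FM [FU1 FU2]]]]]]] v Hv.
  rewrite Forall_forall in FM, FU1.
  apply vals_in in Hv as [p [Hp <-]].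
  apply (Permutation_in p P1), in_app_or in Hp as [Hp|Hp].
  - right. apply in_map_iff in Hp as [pq [<- Hpq]].
    exists (pers (snd pq)). split; [|apply linf_pers, FM, Hpq].
    apply vals_in. exists (snd pq). split; [|reflexivity].
    apply (Permutation_in _ (Permutation_sym P2)), in_or_app. left. apply in_map, Hpq.
  - left. specialize (FU1 p Hp). lra.
Qed.

Lemma matching_negative_eps_empty (eps : R) (D1 D2 : diagram) :
  eps < 0 -> off_diagonal D1 -> eps_matching eps D1 D2 -> D1 = [].
Proof.
  intros Hneg HD [M [U1 [U2 [P1 [_ [FM [FU1 _]]]]]]].
  destruct D1 as [|p D1]; [reflexivity|exfalso].
  apply Forall_inv in HD.
  assert (Hp : In p (map fst M ++ U1)) by (apply (Permutation_in _ P1); left; reflexivity).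
  apply in_app_or in Hp as [Hp|Hp].
  - apply in_map_iff in Hp as [pq [_ Hpq]]. rewrite Forall_forall in FM.
    pose proof (FM pq Hpq). pose proof (linf_nonneg (fst pq) (snd pq)). lra.
  - rewrite Forall_forall in FU1. specialize (FU1 p Hp). unfold pers in FU1. lra.
Qed.

Section Transfer.
Variables (G C : diagram) (eps : R).
Hypothesis eps_nonneg : 0 <= eps.
Hypothesis close_GC : pers_values_close eps G C.
Hypothesis close_CG : pers_values_close eps C G.

Definition transfer (a : R) : R := least_from (vals C) (a - 2 * eps).

Lemma transfer_spec (a : R) : In a (vals G) -> 2 * eps < a ->
  In (transfer a) (vals C) /\ a - 2 * eps <= transfer a <= a + 2 * eps /\
  forall v, In v (vals C) -> a - 2 * eps <= v -> transfer a <= v.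
Proof.
  intros Ha Hnoise.
  destruct (close_GC a Ha) as [|[w [Hw Haw]]]; [lra|]. apply Rabs_le_inv in Haw.
  destruct (least_from_spec (vals C) (a - 2 * eps)) as [Hin [Hge Hmin]];
    [exists w; split; [exact Hw|lra]|].
  pose proof (Hmin w Hw ltac:(lra)).
  unfold transfer. split; [exact Hin|]. split; [lra|exact Hmin].
Qed.

Lemma transfer_width_lower (a : R) : In a (vals G) -> 2 * eps < a ->
  gap_width G a - 4 * eps <= gap_width C (transfer a).
Proof.
  intros Ha Hnoise. destruct (transfer_spec a Ha Hnoise) as [_ [Hbounds Hmin]].
  assert (Hlo : gap_lo C (transfer a) <= gap_lo G a + 2 * eps).
  { pose proof (gap_lo_nonneg G a).
    apply gap_lo_le; [lra|]. intros v Hv Hvlt.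
    assert (Hva : v < a - 2 * eps).
    { destruct (Rlt_or_le v (a - 2 * eps)) as [|Hle]; [assumption|].
      specialize (Hmin v Hv Hle). lra. }
    destruct (close_CG v Hv) as [|[g [Hg Hvg]]]; [lra|].
    apply Rabs_le_inv in Hvg. pose proof (gap_lo_ge G a g Hg ltac:(lra)). lra. }
  unfold gap_width. lra.
Qed.

Lemma gap_lo_lowest_close (g c : R) : In c (vals C) -> Rabs (c - g) <= 2 * eps ->
  (forall g', In g' (vals G) -> Rabs (c - g') <= 2 * eps -> g <= g') ->
  gap_lo G g - 2 * eps <= gap_lo C c.
Proof.
  intros Hc Hcg Hlowest. apply Rabs_le_inv in Hcg. pose proof (gap_lo_nonneg C c).
  destruct (gap_lo_cases G g) as [->|[Hg' Hg'g]]; [lra|].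
  set (g' := gap_lo G g) in *.
  destruct (Rle_or_lt g' (2 * eps)) as [|Hbig]; [lra|].
  destruct (close_GC g' Hg') as [|[v [Hv Hg'v]]]; [lra|]. apply Rabs_le_inv in Hg'v.
  destruct (Rlt_or_le v c) as [Hvc|Hcv].
  - pose proof (gap_lo_ge C c v Hv Hvc). lra.
  - exfalso. assert (Hle : g <= g') by (apply Hlowest; [exact Hg'|apply Rabs_le; lra]). lra.
Qed.

Lemma transfer_width_upper (c : R) : In c (vals C) ->
  gap_width C c <= 4 * eps \/
  exists g, In g (vals G) /\ transfer g = c /\ gap_width C c <= gap_width G g + 4 * eps.
Proof.
  intros Hc. pose proof (gap_width_le C c).
  destruct (close_CG c Hc) as [|Hex]; [left; lra|].
  destruct (exists_argmin (vals G) (fun g => Rabs (c - g) <= 2 * eps) (fun g => g) Hex)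
    as [g [Hg [Hcg Hlowest]]].
  pose proof (Rabs_le_inv _ _ Hcg).
  destruct (classic (exists v, In v (vals C) /\ g - 2 * eps <= v /\ v < c))
    as [[v [Hv [Hgv Hvc]]]|Hnone].
  - left. pose proof (gap_width_le_diff C v c Hv Hvc). lra.
  - right. exists g. split; [exact Hg|].
    assert (Hcmin : forall v, In v (vals C) -> g - 2 * eps <= v -> c <= v).
    { intros v Hv Hgv. destruct (Rlt_or_le v c); [exfalso; eauto|assumption]. }
    destruct (least_from_spec (vals C) (g - 2 * eps)) as [Hin [Hge Hmin]];
      [exists c; split; [exact Hc|lra]|].
    split.
    + apply Rle_antisym; [apply Hmin; [exact Hc|lra]|apply Hcmin; assumption].
    + pose proof (gap_lo_lowest_close g c Hc Hcg Hlowest). unfold gap_width. lra.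
Qed.

Lemma transfer_strict_mono (a a' : R) : In a (vals G) -> In a' (vals G) ->
  2 * eps < a -> 4 * eps < gap_width G a' -> a < a' -> transfer a < transfer a'.
Proof.
  intros Ha Ha' Hnoise Hwide Hlt. pose proof (gap_width_le_diff G a a' Ha Hlt).
  destruct (transfer_spec a Ha Hnoise) as [_ [Hb _]].
  destruct (transfer_spec a' Ha' ltac:(lra)) as [_ [Hb' _]]. lra.
Qed.

Lemma transfer_threshold (a x y : R) : In a (vals G) -> 4 * eps < gap_width G a ->
  In x (vals G) -> In y (vals C) -> Rabs (x - y) <= 2 * eps ->
  (a <= x <-> transfer a <= y).
Proof.
  intros Ha Hwide Hx Hy Hxy. apply Rabs_le_inv in Hxy. pose proof (gap_width_le G a).
  destruct (transfer_spec a Ha ltac:(lra)) as [_ [Hb Hmin]].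
  split; intros Hle.
  - apply Hmin; [exact Hy|lra].
  - destruct (Rlt_or_le x a) as [Hxa|]; [|assumption].
    pose proof (gap_lo_ge G a x Hx Hxa). unfold gap_width in Hwide. lra.
Qed.

Variable k : nat.
Hypothesis G_off_diagonal : off_diagonal G.
Hypothesis gap_hyp : dgap_width G k - dgap_width G (S k) > 8 * eps.

Lemma dgap_k_nonzero : dgap_width G k <> 0.
Proof. pose proof (dgap_width_nonneg G (S k) G_off_diagonal). lra. Qed.

Lemma top_gap_wide (a : R) : In a (top_gaps G k) ->
  In a (vals G) /\ dgap_width G (S k) + 8 * eps < gap_width G a /\ 8 * eps < a.
Proof.
  intros Ha. pose proof (top_gap_width_ge G k a G_off_diagonal Ha).
  pose proof (dgap_width_nonneg G (S k) G_off_diagonal). pose proof (gap_width_le G a).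
  apply top_gaps_spec in Ha as [Ha _]. repeat split; [exact Ha|lra|lra].
Qed.

Lemma top_gaps_transfer (c : R) : In c (vals C) ->
  (In c (top_gaps C k) <-> In c (map transfer (top_gaps G k))).
Proof.
  pose proof (dgap_width_nonneg G (S k) G_off_diagonal) as Hnn.
  apply top_gaps_char.
  - apply NoDup_map_NoDup_ForallPairs; [|apply NoDup_filter, vals_NoDup].
    intros a a' Ha Ha' Heq.
    destruct (top_gap_wide a Ha) as [Hav [Hw Hn]], (top_gap_wide a' Ha') as [Hav' [Hw' Hn']].
    destruct (Rtotal_order a a') as [Hlt|[Heqa|Hlt]]; [|exact Heqa|].
    + pose proof (transfer_strict_mono a a' Hav Hav' ltac:(lra) ltac:(lra) Hlt). lra.
    + pose proof (transfer_strict_mono a' a Hav' Hav ltac:(lra) ltac:(lra) Hlt). lra.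
  - rewrite length_map. apply top_gaps_length, dgap_k_nonzero.
  - intros b Hb. apply in_map_iff in Hb as [a [<- Ha]].
    destruct (top_gap_wide a Ha) as [Hav [_ Hnoise]]. apply (transfer_spec a Hav); lra.
  - intros b c' Hb Hc' Hnotb. apply in_map_iff in Hb as [a [<- Ha]].
    destruct (top_gap_wide a Ha) as [Hav [Hw Hnoise]].
    pose proof (transfer_width_lower a Hav ltac:(lra)).
    destruct (transfer_width_upper c' Hc') as [|[g [Hg [Hgc Hwc]]]]; [lra|].
    assert (Hgtop : ~ In g (top_gaps G k)) by (intros Hgt; apply Hnotb, in_map_iff; eauto).
    pose proof (nontop_gap_width_le G k g dgap_k_nonzero Hg Hgtop). lra.
Qed.

Lemma lowest_top_gap_transfer (A : R) : In A (top_gaps G k) ->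
  (forall a, In a (top_gaps G k) -> A <= a) ->
  In (transfer A) (top_gaps C k) /\ forall c, In c (top_gaps C k) -> transfer A <= c.
Proof.
  intros HA HAmin. destruct (top_gap_wide A HA) as [HAv [HAw HAnoise]].
  destruct (transfer_spec A HAv ltac:(lra)) as [HFA _].
  split; [apply top_gaps_transfer, in_map; assumption|].
  intros c Hc. pose proof Hc as Hcv. apply top_gaps_spec in Hcv as [Hcv _].
  apply top_gaps_transfer, in_map_iff in Hc as [a [<- Ha]]; [|exact Hcv].
  destruct (top_gap_wide a Ha) as [Hav [Haw _]].
  pose proof (dgap_width_nonneg G (S k) G_off_diagonal).
  destruct (Rle_lt_or_eq_dec A a (HAmin a Ha)) as [Hlt|<-]; [|lra].
  pose proof (transfer_strict_mono A a HAv Hav ltac:(lra) ltac:(lra) Hlt). lra.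
Qed.

End Transfer.

Definition above (t : R) (p : dot) : bool := if Rle_dec t (pers p) then true else false.

Lemma lowest_top_gap (D : diagram) (k : nat) : top_gaps D k <> [] ->
  exists t, In t (top_gaps D k) /\ forall a, In a (top_gaps D k) -> t <= a.
Proof.
  destruct (top_gaps D k) as [|x l]; [contradiction|intros _].
  exists (fold_right Rmin x l). apply fold_Rmin_spec.
Qed.

Lemma DS_lowest (D : diagram) (k : nat) (t : R) : In t (top_gaps D k) ->
  (forall a, In a (top_gaps D k) -> t <= a) -> DS D k = filter (above t) D.
Proof.
  unfold DS. destruct (top_gaps D k) as [|x l]; [intros []|intros Ht Hmin].
  destruct (fold_Rmin_spec x l) as [Hin Hle].
  replace (fold_right Rmin x l) with t; [reflexivity|].
  apply Rle_antisym; [apply Hmin, Hin|apply Hle, Ht].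
Qed.

Lemma threshold_bijection (eps : R) (D1 D2 : diagram) (s t : R) :
  eps_matching eps D1 D2 -> 2 * eps < s -> 2 * eps < t ->
  (forall p q, In p D1 -> In q D2 -> linf p q <= eps -> (s <= pers p <-> t <= pers q)) ->
  eps_bijection eps (filter (above s) D1) (filter (above t) D2).
Proof.
  intros [M [U1 [U2 [P1 [P2 [FM [FU1 FU2]]]]]]] Hs Ht Hcompat.
  rewrite Forall_forall in FU1, FU2.
  assert (Hnoise : forall U r, 2 * eps < r -> (forall p, In p U -> pers p / 2 <= eps) ->
                     filter (above r) U = []).
  { intros U r Hr HU. induction U as [|p U IH]; [reflexivity|]. simpl.
    unfold above at 1. pose proof (HU p (or_introl eq_refl)).
    destruct (Rle_dec r (pers p)); [lra|]. apply IH. intros q Hq. apply HU. right; exact Hq. }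
  exists (filter (fun pq => above s (fst pq)) M). split; [|split].
  - eapply Permutation_trans; [apply Permutation_filter_compat, P1|].
    rewrite filter_app, filter_map_swap, (Hnoise U1 s Hs FU1), app_nil_r.
    apply Permutation_refl.
  - eapply Permutation_trans; [apply Permutation_filter_compat, P2|].
    rewrite filter_app, filter_map_swap, (Hnoise U2 t Ht FU2), app_nil_r.
    erewrite filter_ext_in; [apply Permutation_refl|].
    intros pq Hpq. rewrite Forall_forall in FM.
    assert (Hp : In (fst pq) D1)
      by (apply (Permutation_in _ (Permutation_sym P1)), in_or_app; left; apply in_map, Hpq).
    assert (Hq : In (snd pq) D2)
      by (apply (Permutation_in _ (Permutation_sym P2)), in_or_app; left; apply in_map, Hpq).
    specialize (Hcompat _ _ Hp Hq (FM pq Hpq)). unfold above.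
    destruct (Rle_dec s (pers (fst pq))), (Rle_dec t (pers (snd pq))); tauto.
  - rewrite Forall_forall in FM |- *. intros pq Hpq. apply filter_In in Hpq as [Hpq _].
    exact (FM pq Hpq).
Qed.

Theorem mainTheorem12 (PDG PDC : diagram) (eps : R) (k : nat) :
  off_diagonal PDG -> off_diagonal PDC ->
  eps_matching eps PDG PDC ->
  (1 <= k)%nat ->
  dgap_width PDG k - dgap_width PDG (S k) > 8 * eps ->
  eps_bijection eps (DS PDG k) (DS PDC k).
Proof.
  intros HG HC Hmatch Hk Hgap.
  destruct (Rlt_or_le eps 0) as [Hneg|Heps].
  { rewrite (matching_negative_eps_empty eps PDG PDC Hneg HG Hmatch),
      (matching_negative_eps_empty eps PDC PDG Hneg HC (eps_matching_sym eps PDG PDC Hmatch)).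
    exists []. repeat constructor. }
  pose proof (matching_values_close eps PDG PDC Hmatch) as Hclose_GC.
  pose proof (matching_values_close eps PDC PDG (eps_matching_sym eps PDG PDC Hmatch)) as Hclose_CG.
  assert (Htop : top_gaps PDG k <> []).
  { intros Hnil. pose proof (top_gaps_length PDG k (dgap_k_nonzero PDG eps Heps k HG Hgap)) as Hlen.
    rewrite Hnil in Hlen. simpl in Hlen. lia. }
  destruct (lowest_top_gap PDG k Htop) as [A [HA HAmin]].
  destruct (lowest_top_gap_transfer PDG PDC eps Heps Hclose_GC Hclose_CG k HG Hgap A HA HAmin)
    as [HFA HFAmin].
  rewrite (DS_lowest PDG k A HA HAmin), (DS_lowest PDC k _ HFA HFAmin).
  destruct (top_gap_wide PDG eps k HG Hgap A HA) as [HAv [HAw HAnoise]].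
  pose proof (dgap_width_nonneg PDG (S k) HG).
  destruct (transfer_spec PDG PDC eps Hclose_GC A HAv ltac:(lra)) as [_ [HFAb _]].
  apply threshold_bijection; [exact Hmatch|lra|lra|].
  intros p q Hp Hq Hpq.
  apply (transfer_threshold PDG PDC eps Heps Hclose_GC); [exact HAv|lra|..|apply linf_pers, Hpq];
    apply vals_in; eauto.
Qed.
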